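(* In the infinite-color urn model with parameters $\ell,s$ and initial cumulative counts $m_1,\dots,m_s$, for any $k>s$ and any positive integer $q$: (a) $\mathbb{E}M_k(n)^q\asymp n^{q\ell/(\ell+1)}$ as $n\to\infty$, i.e. the ratio is bounded above and below by positive constants not depending on $n$; (b) $\mathbb{E}\big\{M_k(n)(M_k(n)+1)\cdots(M_k(n)+\ell)\big\}=\big(m_s+(\ell+1)(k-s)+\ell\big)\,n^\ell\left(\frac{\ell+1}{\ell}\right)^{\ell}\big(1+O(n^{-1})\big)$ as $n\to\infty$; (c) $\displaystyle\limsup_{n\to\infty}\mathbb{E}\Big(\frac{n^{\ell/(\ell+1)}}{M_k(n)}\Big)<\infty$.
   Context: Infinite-color urn model: at time $0$ the urn contains balls of colors $1,\dots,s$ (at least one of each). Fix an integer $\ell\ge1$. At the $n$th step a ball is drawn uniformly at random and returned with one additional ball of the same color; if $n$ is a multiple of $\ell$, one ball of the new color $s+n/\ell$ is added after the $n$th draw. $M_k(n)$ is the number of balls with colors in $\{1,\dots,k\}$ after step $n$ is completed, and $m_k=M_k(0)$ (with $m_1\ge1$, $m_{k+1}-m_k\ge1$ for $k<s$). *)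

From Stdlib Require Export Reals List Arith.
Export ListNotations.
Open Scope R_scope.

(* Urn state: a list of ball counts; index i (0-based) holds color i+1. *)

Fixpoint incr (st : list nat) (i : nat) : list nat :=
  match st, i with
  | [], _ => []
  | x :: r, O => S x :: r
  | x :: r, S j => x :: incr r j
  end.

Definition total (st : list nat) : nat := list_sum st.

(* the n-th step (n >= 1), given that the color at index i was drawn:
   return the drawn ball plus one of the same color; if l divides n,
   add one ball of a new color (appended at the end). *)
Definition urn_step (l n : nat) (st : list nat) (i : nat) : list nat :=
  let st' := incr st i in
  if Nat.eqb (Nat.modulo n l) 0 then st' ++ [1%nat] else st'.

(* expect l f t r st = expectation of f(state) after r further steps,
   starting from state st after t completed steps; a ball is drawn
   uniformly at random, i.e. color index i with probability st_i / total. *)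
Fixpoint expect (l : nat) (f : list nat -> R) (t r : nat) (st : list nat) : R :=
  match r with
  | O => f st
  | S r' =>
      fold_right Rplus 0
        (map (fun i => INR (nth i st O) / INR (total st) *
                       expect l f (S t) r' (urn_step l (S t) st i))
             (seq 0 (length st)))
  end.

Definition urnE (l : nat) (a : list nat) (n : nat) (f : list nat -> R) : R :=
  expect l f 0 n a.

Definition Mk (k : nat) (st : list nat) : nat := list_sum (firstn k st).

Definition rising (x : R) (l : nat) : R :=
  fold_right Rmult 1 (map (fun j => x + INR j) (seq 0 (S l))).

From Stdlib Require Import Reals List Arith Lra Lia.
Open Scope R_scope.

(* Put s = length a, n0 = (k - s) l and A = m_s + (l+1)(k - s).  After n0 steps the
   colours s+1, ..., k have all been introduced and no colour > k exists yet, so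
   M_k(n0) = A deterministically.  From then on M_k increases by one at step t+1 with
   probability M_k / T_t, where T_t = m_s + t + t/l is the number of balls after t steps.
   Hence any g with  M g(M+1) + (T - M) g(M) = (T + c) g(M)  is an eigenfunction:
       E g(M_k(n)) = Phi_c(n) g(A),   Phi_c(n) = prod_{n0 <= t < n} (T_t + c) / T_t.
   The functions M, the rising factorials M(M+1)...(M+p) and 1/(M-1) are eigenfunctions
   with c = 1, p+1 and -1.
   (b) Phi_{l+1}(n) = G(n) / G(n0) for an explicit G(n) = ((l+1)n/l)^l (1 + O(1/n)),
       and E{M(M+1)...(M+l)} = (A + l) G(n).
   (a) Bernoulli gives Phi_{l+1} <= Phi_1^{l+1}, and Jensen gives (E M)^{l+1} <= E M^{l+1};
       hence Phi_1(n) is of exact order n^{l/(l+1)}, and E M^q lies between (E M)^q and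
       E[M(M+1)...(M+q-1)] = Phi_q(n) rising(A) <= Phi_1(n)^q rising(A).
   (c) Phi_{-1} Phi_1 <= 1 bounds E 1/(M-1), hence E n^{l/(l+1)} / M. *)

(* Finite sums sum_{i < n} F i, in the shape produced by the definition of [expect]. *)
Definition rsum (F : nat -> R) (n : nat) : R := fold_right Rplus 0 (map F (seq 0 n)).

Lemma rsum_S F n : rsum F (S n) = rsum F n + F n.
Proof.
  unfold rsum. rewrite seq_S, map_app, fold_right_app. simpl.
  generalize (F n). induction (map F (seq 0 n)) as [|x L IH]; intros y; simpl; [lra|].
  rewrite IH. lra.
Qed.

Lemma rsum_ext F G n : (forall i, (i < n)%nat -> F i = G i) -> rsum F n = rsum G n.
Proof. induction n; intros H; [reflexivity|]. rewrite !rsum_S, IHn, H; auto. Qed.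

Lemma rsum_shift F n : rsum F (S n) = F 0%nat + rsum (fun i => F (S i)) n.
Proof.
  induction n; [unfold rsum; simpl; lra|].
  rewrite rsum_S, IHn, rsum_S. lra.
Qed.

Lemma rsum_scal c F n : rsum (fun i => c * F i) n = c * rsum F n.
Proof. induction n; [unfold rsum; simpl; ring|rewrite !rsum_S, IHn; ring]. Qed.

Lemma rsum_plus F G n : rsum (fun i => F i + G i) n = rsum F n + rsum G n.
Proof. induction n; [unfold rsum; simpl; ring|rewrite !rsum_S, IHn; ring]. Qed.

Lemma rsum_le F G n : (forall i, (i < n)%nat -> F i <= G i) -> rsum F n <= rsum G n.
Proof.
  induction n; intros H; [unfold rsum; simpl; lra|]. rewrite !rsum_S.
  assert (rsum F n <= rsum G n) by auto. assert (F n <= G n) by auto. lra.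
Qed.

Lemma rsum_trunc F k n :
  rsum (fun i => if Nat.ltb i k then F i else 0) n = rsum F (Nat.min n k).
Proof.
  induction n; [reflexivity|].
  rewrite rsum_S, IHn. destruct (Nat.ltb_spec n k).
  - replace (Nat.min (S n) k) with (S (Nat.min n k)) by lia.
    replace (Nat.min n k) with n by lia. rewrite rsum_S. reflexivity.
  - replace (Nat.min (S n) k) with (Nat.min n k) by lia. ring.
Qed.

Lemma rsum_counts st k : (k <= length st)%nat ->
  rsum (fun i => INR (nth i st O)) k = INR (Mk k st).
Proof.
  revert k; induction st as [|x st IH]; intros k Hk.
  { simpl in Hk. replace k with 0%nat by lia. reflexivity. }
  destruct k; [reflexivity|].
  rewrite rsum_shift. simpl nth. rewrite IH by (simpl in Hk; lia).
  unfold Mk; simpl. rewrite plus_INR. ring.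
Qed.

Lemma Mk_all st : Mk (length st) st = total st.
Proof. unfold Mk. rewrite firstn_all. reflexivity. Qed.

Lemma incr_length st i : length (incr st i) = length st.
Proof. revert i; induction st; intros [|i]; simpl; auto. Qed.

Lemma incr_Mk st i k : (i < length st)%nat ->
  Mk k (incr st i) = (Mk k st + if Nat.ltb i k then 1 else 0)%nat.
Proof.
  unfold Mk. revert i k; induction st; intros [|i] [|k] H; simpl in *; try lia.
  rewrite IHst by lia. destruct (Nat.ltb_spec i k), (Nat.ltb_spec (S i) (S k)); lia.
Qed.

(* [bump l n] = 1 exactly when step n introduces a new colour. *)
Definition bump (l n : nat) : nat := if Nat.eqb (Nat.modulo n l) 0 then 1%nat else 0%nat.

Lemma step_length l n st i : length (urn_step l n st i) = (length st + bump l n)%nat.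
Proof.
  unfold urn_step, bump. destruct (Nat.eqb (n mod l) 0);
  [rewrite length_app|]; rewrite incr_length; simpl; lia.
Qed.

Lemma step_Mk l n st i k : (i < length st)%nat -> (k <= length st)%nat ->
  Mk k (urn_step l n st i) = (Mk k st + if Nat.ltb i k then 1 else 0)%nat.
Proof.
  intros H Hk. rewrite <- incr_Mk by auto. unfold urn_step.
  destruct (Nat.eqb (n mod l) 0); auto.
  unfold Mk. rewrite firstn_app, incr_length.
  replace (k - length st)%nat with 0%nat by lia. simpl. rewrite app_nil_r. auto.
Qed.

Lemma step_total l n st i : (i < length st)%nat ->
  total (urn_step l n st i) = (total st + 1 + bump l n)%nat.
Proof.
  intros H.
  assert (Hincr : total (incr st i) = S (total st)).
  { rewrite <- (Mk_all (incr st i)), incr_length, incr_Mk, Mk_all by auto.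
    destruct (Nat.ltb_spec i (length st)); lia. }
  unfold urn_step, bump. destruct (Nat.eqb (n mod l) 0).
  - unfold total in *. rewrite list_sum_app, Hincr. simpl. lia.
  - rewrite Hincr. lia.
Qed.

Definition prob (st : list nat) (i : nat) : R := INR (nth i st O) / INR (total st).

Lemma expect_S l f t r st : expect l f t (S r) st =
  rsum (fun i => prob st i * expect l f (S t) r (urn_step l (S t) st i)) (length st).
Proof. reflexivity. Qed.

Lemma prob_nonneg st i : (0 < total st)%nat -> 0 <= prob st i.
Proof.
  intros H. unfold prob. apply Rmult_le_pos; [apply pos_INR|].
  left. apply Rinv_0_lt_compat, lt_0_INR. lia.
Qed.

Lemma prob_Mk st k : (0 < total st)%nat -> (k <= length st)%nat ->
  rsum (prob st) k = INR (Mk k st) / INR (total st).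
Proof.
  intros H Hk. unfold prob, Rdiv.
  rewrite (rsum_ext _ (fun i => / INR (total st) * INR (nth i st O))) by (intros; ring).
  rewrite rsum_scal, rsum_counts by auto. ring.
Qed.

Lemma prob_sum st : (0 < total st)%nat -> rsum (prob st) (length st) = 1.
Proof.
  intros H. rewrite prob_Mk, Mk_all by auto. field. apply not_0_INR. lia.
Qed.

Section Expectation.
Variables (l : nat) (P : nat -> list nat -> Prop).
Hypothesis P_step : forall t st i, P t st -> (i < length st)%nat ->
  P (S t) (urn_step l (S t) st i).
Hypothesis P_nonempty : forall t st, P t st -> (0 < total st)%nat.

Lemma expect_const f r V j : forall t st, P t st ->
  (forall st', P (t + j)%nat st' -> expect l f (t + j) r st' = V) ->
  expect l f t (j + r) st = V.
Proof.
  induction j; intros t st Ht HV.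
  { rewrite Nat.add_0_r in HV. simpl. auto. }
  simpl plus. rewrite expect_S.
  rewrite (rsum_ext _ (fun i => V * prob st i)).
  - rewrite rsum_scal, prob_sum by eauto. ring.
  - intros i Hi. rewrite (IHj (S t)); [ring|auto|].
    intros st' H'. rewrite Nat.add_succ_comm in *. auto.
Qed.

Lemma expect_affine F c0 c1 : forall r t st, P t st ->
  expect l (fun x => c0 + c1 * F x) t r st = c0 + c1 * expect l F t r st.
Proof.
  induction r; intros t st Ht; [reflexivity|].
  rewrite !expect_S.
  rewrite (rsum_ext _ (fun i => c0 * prob st i +
             c1 * (prob st i * expect l F (S t) r (urn_step l (S t) st i)))).
  - rewrite rsum_plus, !rsum_scal, prob_sum by eauto. ring.
  - intros i Hi. rewrite IHr by auto. ring.
Qed.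

Lemma expect_mono F G : forall r t st, P t st ->
  (forall st', P (t + r)%nat st' -> F st' <= G st') ->
  expect l F t r st <= expect l G t r st.
Proof.
  induction r; intros t st Ht HFG.
  { apply HFG. rewrite Nat.add_0_r. auto. }
  rewrite !expect_S. apply rsum_le. intros i Hi.
  apply Rmult_le_compat_l; [apply prob_nonneg; eauto|].
  apply IHr; auto. intros st' H'. apply HFG. rewrite <- Nat.add_succ_comm. auto.
Qed.

Lemma expect_eigen k (g : nat -> R) (Phi : nat -> R) (t0 : nat) :
  (forall t, (t0 <= t)%nat -> Phi t <> 0) ->
  (forall t st, (t0 <= t)%nat -> P t st -> (k <= length st)%nat) ->
  (forall t st, (t0 <= t)%nat -> P t st ->
     INR (Mk k st) * g (S (Mk k st)) + (INR (total st) - INR (Mk k st)) * g (Mk k st)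
     = INR (total st) * (Phi (S t) / Phi t) * g (Mk k st)) ->
  forall r t st, (t0 <= t)%nat -> P t st ->
  expect l (fun x => g (Mk k x)) t r st = Phi (t + r)%nat / Phi t * g (Mk k st).
Proof.
  intros HPhi Hk Heig. induction r; intros t st Ht HPt.
  { simpl. rewrite Nat.add_0_r. field. auto. }
  rewrite expect_S.
  pose proof (P_nonempty _ _ HPt) as Htot. pose proof (Hk _ _ Ht HPt) as Hkl.
  set (M := Mk k st).
  rewrite (rsum_ext _ (fun i => (Phi (S t + r)%nat / Phi (S t)) *
     (g M * prob st i + (if Nat.ltb i k then (g (S M) - g M) * prob st i else 0)))).
  - rewrite rsum_scal, rsum_plus, rsum_scal, rsum_trunc, rsum_scal, prob_sum by auto.
    replace (Nat.min (length st) k) with k by lia. rewrite prob_Mk by auto. fold M.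
    pose proof (Heig t st Ht HPt) as E. fold M in E.
    rewrite <- Nat.add_succ_comm.
    assert (HT : INR (total st) <> 0) by (apply not_0_INR; lia).
    assert (HP0 : Phi t <> 0) by auto. assert (HP1 : Phi (S t) <> 0) by (apply HPhi; lia).
    apply (Rmult_eq_reg_l (INR (total st))); auto.
    transitivity (Phi (S t + r)%nat / Phi (S t) *
                  (INR M * g (S M) + (INR (total st) - INR M) * g M)).
    + field. auto.
    + rewrite E. field. auto.
  - intros i Hi. rewrite IHr by (auto; lia).
    rewrite step_Mk by auto. fold M.
    destruct (Nat.ltb i k); simpl; [rewrite Nat.add_1_r|rewrite Nat.add_0_r]; ring.
Qed.

End Expectation.

Lemma bernoulli (y : R) (p : nat) : 0 <= y -> 1 + INR p * y <= (1 + y) ^ p.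
Proof.
  intros Hy. induction p; [simpl; lra|].
  rewrite S_INR. simpl pow. pose proof (pos_INR p). nra.
Qed.

Lemma bernoulli_minus (y : R) (p : nat) : 0 <= y <= 1 -> 1 - INR p * y <= (1 - y) ^ p.
Proof.
  intros Hy. induction p; [simpl; lra|].
  rewrite S_INR. simpl pow.
  assert (0 <= (1 - y) ^ p) by (apply pow_le; lra). pose proof (pos_INR p). nra.
Qed.

(* By convexity, (1 + y)^p lies below its chord between y = 0 and y = 1. *)
Lemma pow_chord (y : R) (p : nat) : 0 <= y <= 1 -> (1 + y) ^ p <= 1 + (2 ^ p - 1) * y.
Proof.
  intros Hy. induction p; [simpl; lra|].
  simpl pow. assert (1 <= 2 ^ p) by (apply pow_R1_Rle; lra).
  assert (0 <= (2 ^ p - 1) * y * (1 - y)) by (apply Rmult_le_pos; [apply Rmult_le_pos|]; lra).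
  assert ((1 + y) * (1 + y) ^ p <= (1 + y) * (1 + (2 ^ p - 1) * y))
    by (apply Rmult_le_compat_l; lra).
  nra.
Qed.

(* Phi T c n0 t = prod_{n0 <= u < t} (T u + c) / T u : the growth factor of an eigenfunction
   with eigenvalue shift c, when T u is the number of balls after u steps. *)
Fixpoint Phi (T : nat -> R) (c : R) (n0 t : nat) : R :=
  match t with
  | O => 1
  | S t' => Phi T c n0 t' * (if Nat.leb n0 t' then (T t' + c) / T t' else 1)
  end.

Section Products.
Variables (T : nat -> R) (n0 : nat).
Hypothesis T_pos : forall t, (n0 <= t)%nat -> 0 < T t.

Lemma Phi_before c t : (t <= n0)%nat -> Phi T c n0 t = 1.
Proof.
  induction t; intros H; simpl; auto. rewrite IHt by lia.
  destruct (Nat.leb_spec n0 t); [lia|ring].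
Qed.

Lemma Phi_S c t : (n0 <= t)%nat -> Phi T c n0 (S t) = Phi T c n0 t * ((T t + c) / T t).
Proof. intros H. simpl. destruct (Nat.leb_spec n0 t); [auto|lia]. Qed.

Lemma Phi_pos c : (forall t, (n0 <= t)%nat -> 0 < T t + c) -> forall t, 0 < Phi T c n0 t.
Proof.
  intros Hc. induction t; simpl; [lra|].
  apply Rmult_lt_0_compat; auto. destruct (Nat.leb_spec n0 t); [|lra].
  apply Rdiv_lt_0_compat; auto.
Qed.

Lemma Phi1_pos t : 0 < Phi T 1 n0 t.
Proof. apply Phi_pos. intros u Hu. pose proof (T_pos u Hu). lra. Qed.

(* By Bernoulli, (T + p + 1)/T <= ((T + 1)/T)^(p+1) factor by factor. *)
Lemma Phi_le_pow p t : Phi T (INR p + 1) n0 t <= Phi T 1 n0 t ^ (S p).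
Proof.
  induction t; [simpl; rewrite pow1; lra|].
  destruct (Nat.le_gt_cases n0 t) as [Ht|Ht].
  - rewrite !Phi_S, Rpow_mult_distr by auto. pose proof (T_pos t Ht) as HT.
    assert (H0 : 0 <= Phi T (INR p + 1) n0 t).
    { left. apply Phi_pos. intros u Hu. pose proof (T_pos u Hu). pose proof (pos_INR p). lra. }
    apply Rmult_le_compat; auto.
    + apply Rlt_le, Rdiv_lt_0_compat; [pose proof (pos_INR p)|]; lra.
    + replace ((T t + 1) / T t) with (1 + / T t) by (field; lra).
      replace ((T t + (INR p + 1)) / T t) with (1 + INR (S p) * / T t)
        by (rewrite S_INR; field; lra).
      apply bernoulli. left. apply Rinv_0_lt_compat. auto.
  - rewrite !Phi_before, pow1 by lia. lra.
Qed.

(* (T - 1)(T + 1) <= T^2, factor by factor. *)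
Lemma Phi_opp_le_inv : (forall t, (n0 <= t)%nat -> 1 < T t) ->
  forall t, Phi T (-1) n0 t * Phi T 1 n0 t <= 1.
Proof.
  intros HT1.
  assert (Hm : forall t, 0 < Phi T (-1) n0 t).
  { apply Phi_pos. intros u Hu. pose proof (HT1 u Hu). lra. }
  induction t; [simpl; lra|].
  destruct (Nat.le_gt_cases n0 t) as [Ht|Ht].
  - rewrite !Phi_S by auto. pose proof (HT1 t Ht) as HT. pose proof (Hm t). pose proof (Phi1_pos t).
    replace (Phi T (-1) n0 t * ((T t + -1) / T t) * (Phi T 1 n0 t * ((T t + 1) / T t)))
      with (Phi T (-1) n0 t * Phi T 1 n0 t * (1 - / (T t * T t))) by (field; lra).
    assert (0 < / (T t * T t)) by (apply Rinv_0_lt_compat; nra).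
    assert (0 <= Phi T (-1) n0 t * Phi T 1 n0 t) by nra.
    nra.
  - rewrite !Phi_before by lia. lra.
Qed.

End Products.

Lemma rising_0 x : rising x 0 = x.
Proof. unfold rising. simpl. ring. Qed.

Lemma rising_S x p : rising x (S p) = rising x p * (x + INR (S p)).
Proof.
  unfold rising. rewrite (seq_S (S p) 0), map_app, Nat.add_0_l. cbn [map].
  generalize (x + INR (S p)). induction (map (fun j => x + INR j) (seq 0 (S p)));
  intros y; simpl; [ring|rewrite IHl; ring].
Qed.

(* The shift identity (x+1)...(x+p+1) x = x ... (x+p) (x+p+1), which makes the rising
   factorial an eigenfunction of the urn. *)
Lemma rising_shift x p : rising (x + 1) p * x = rising x p * (x + INR p + 1).
Proof.
  induction p.
  - rewrite !rising_0. simpl. ring.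
  - rewrite !rising_S, S_INR.
    replace (rising (x + 1) p * (x + 1 + (INR p + 1)) * x) with
      (rising (x + 1) p * x * (x + 1 + (INR p + 1))) by ring.
    rewrite IHp. ring.
Qed.

Lemma rising_bounds x p : 0 <= x -> x ^ (S p) <= rising x p <= (x + INR p) ^ (S p).
Proof.
  intros Hx. induction p as [|p [IH1 IH2]]; [rewrite rising_0; simpl; lra|].
  rewrite rising_S. pose proof (pos_INR (S p)). pose proof (pow_le x (S p) Hx). split.
  - change (x ^ S (S p)) with (x * x ^ S p). rewrite Rmult_comm.
    apply Rmult_le_compat; lra.
  - change ((x + INR (S p)) ^ S (S p)) with ((x + INR (S p)) * (x + INR (S p)) ^ S p).
    rewrite Rmult_comm. apply Rmult_le_compat; try lra.
    apply (Rle_trans _ _ _ IH2). apply pow_incr. rewrite S_INR. pose proof (pos_INR p). lra.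
Qed.

Lemma rising_pos x p : 0 < x -> 0 < rising x p.
Proof.
  intros Hx. pose proof (rising_bounds x p ltac:(lra)) as [H _].
  pose proof (pow_lt x (S p) Hx). lra.
Qed.

Lemma rising_ratio_bounds (T D u K : R) (l : nat) : (1 <= l)%nat ->
  INR l <= K <= u -> u - 1 <= T -> T + INR l <= u + K -> T + 1 <= D <= T + INR l ->
  u ^ l * (1 - K / u) ^ (S l) <= rising T l / D <= u ^ l * (1 + K / u) ^ (S l).
Proof.
  intros Hl [HlK HKu] HuT HTu [HD1 HD2].
  assert (HL : 1 <= INR l) by (apply (le_INR 1); lia).
  assert (HT : 0 <= T) by lra.
  pose proof (rising_bounds T l HT) as [R1 R2].
  assert (Hy : K / u <= 1) by (apply Rmult_le_reg_r with u; [lra|];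
                               unfold Rdiv; rewrite Rmult_assoc, Rinv_l; lra).
  split.
  - replace (u ^ l * (1 - K / u) ^ S l) with ((u - K) ^ l * (1 - K / u))
      by (replace (u - K) with (u * (1 - K / u)) by (field; lra);
          rewrite Rpow_mult_distr; simpl pow; ring).
    apply Rle_trans with (T ^ l * (T / (T + INR l))).
    + apply Rmult_le_compat.
      * apply pow_le. lra.
      * lra.
      * apply pow_incr. lra.
      * replace (T / (T + INR l)) with (1 - INR l / (T + INR l)) by (field; lra).
        apply Rplus_le_compat_l, Ropp_le_contravar.
        apply Rle_trans with (INR l / u); unfold Rdiv.
        -- apply Rmult_le_compat_l; [lra|]. apply Rinv_le_contravar; lra.
        -- apply Rmult_le_compat_r; [apply Rlt_le, Rinv_0_lt_compat|]; lra.
    + replace (T ^ l * (T / (T + INR l))) with (T ^ S l / (T + INR l)) by (simpl pow; field; lra).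
      unfold Rdiv. apply Rmult_le_compat; auto.
      * apply pow_le. lra.
      * apply Rlt_le, Rinv_0_lt_compat. lra.
      * apply Rinv_le_contravar; lra.
  - replace (u ^ l * (1 + K / u) ^ S l) with ((u + K) ^ S l / u)
      by (replace (u + K) with (u * (1 + K / u)) by (field; lra);
          rewrite Rpow_mult_distr; simpl pow; field; lra).
    unfold Rdiv. apply Rmult_le_compat.
    + apply Rle_trans with (T ^ S l); [apply pow_le|]; lra.
    + apply Rlt_le, Rinv_0_lt_compat. lra.
    + apply Rle_trans with ((T + INR l) ^ S l); auto. apply pow_incr. lra.
    + apply Rinv_le_contravar; lra.
Qed.

Lemma relative_error (X U y : R) (p : nat) : 0 < U -> 0 <= y <= 1 ->
  U * (1 - y) ^ p <= X <= U * (1 + y) ^ p ->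
  exists r, Rabs r <= (2 ^ p + INR p) * y /\ X = U * (1 + r).
Proof.
  intros HU Hy [H1 H2]. exists (X / U - 1). split; [|field; lra].
  pose proof (bernoulli_minus y p Hy). pose proof (pow_chord y p Hy).
  assert (L : U * (1 - INR p * y) <= X) by (apply Rle_trans with (U * (1 - y) ^ p); nra).
  assert (R : X <= U * (1 + (2 ^ p - 1) * y)) by (apply Rle_trans with (U * (1 + y) ^ p); nra).
  assert (Hq : 1 - INR p * y <= X / U <= 1 + (2 ^ p - 1) * y).
  { split; [apply Rmult_le_reg_l with U|apply Rmult_le_reg_l with U]; auto;
    replace (U * (X / U)) with X by (field; lra); lra. }
  pose proof (pos_INR p). pose proof (pow_le 2 p ltac:(lra)).
  apply Rabs_le. split; nra.
Qed.

Lemma scaled_time (n l : nat) : (1 <= l)%nat ->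
  INR n * (INR (S l) / INR l) = INR n + INR (n / l) + INR (n mod l) / INR l /\
  0 <= INR (n mod l) / INR l < 1.
Proof.
  intros Hl. pose proof (Nat.div_mod n l ltac:(lia)) as E.
  pose proof (Nat.mod_upper_bound n l ltac:(lia)) as B.
  assert (HL : 1 <= INR l) by (apply (le_INR 1); lia).
  assert (ER : INR n = INR l * INR (n / l) + INR (n mod l))
    by (rewrite E at 1; rewrite plus_INR, mult_INR; reflexivity).
  assert (Hr : INR (n mod l) < INR l) by (apply lt_INR; auto).
  pose proof (pos_INR (n mod l)).
  split; [rewrite S_INR, ER; field; lra|].
  split.
  - apply Rmult_le_pos; [lra|]. apply Rlt_le, Rinv_0_lt_compat. lra.
  - apply (Rmult_lt_reg_r (INR l)); [lra|]. unfold Rdiv.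
    rewrite Rmult_assoc, Rinv_l by lra. lra.
Qed.

(* The tangent line of y^(j+1) at mu lies below the graph on [0, oo) (convexity); this is
   Jensen's inequality for powers. *)
Lemma pow_tangent (mu y : R) (j : nat) : 0 <= mu -> 0 <= y ->
  mu ^ (S j) + INR (S j) * mu ^ j * (y - mu) <= y ^ (S j).
Proof.
  intros Hm Hy. induction j; [simpl; lra|].
  set (p := mu ^ j) in *. assert (Hp : 0 <= p) by (apply pow_le; auto).
  replace (mu ^ S (S j)) with (mu * mu * p) by (unfold p; simpl; ring).
  replace (mu ^ S j) with (mu * p) in * by (unfold p; simpl; ring).
  replace (y ^ S (S j)) with (y * y ^ S j) by (simpl; ring).
  rewrite !S_INR in *. pose proof (pos_INR j).
  assert (y * (mu * p + (INR j + 1) * p * (y - mu)) <= y * y ^ S j)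
    by (apply Rmult_le_compat_l; auto).
  assert (0 <= (INR j + 1) * p * ((y - mu) * (y - mu)))
    by (apply Rmult_le_pos; [apply Rmult_le_pos|apply Rle_0_sqr]; lra).
  nra.
Qed.

Lemma Rpower_pos (x y : R) : 0 < Rpower x y.
Proof. apply exp_pos. Qed.

Lemma root_of_pow (x : R) (l : nat) : 0 < x -> Rpower (x ^ S l) (/ INR (S l)) = x.
Proof.
  intros Hx. rewrite <- Rpower_pow, Rpower_mult, Rinv_r by (auto; apply not_0_INR; lia).
  apply Rpower_1. auto.
Qed.

Lemma root_scaled_pow (c : R) (n l : nat) : 0 < c -> (1 <= n)%nat ->
  Rpower (c * INR n ^ l) (/ INR (S l)) =
  Rpower c (/ INR (S l)) * Rpower (INR n) (INR l / INR (S l)).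
Proof.
  intros Hc Hn. assert (HN : 0 < INR n) by (apply lt_0_INR; lia).
  rewrite <- Rpower_mult_distr by (auto; apply pow_lt; auto).
  rewrite <- Rpower_pow, Rpower_mult by auto. reflexivity.
Qed.

Lemma pow_root_lower (x c : R) (n l : nat) : 0 < x -> 0 < c -> (1 <= n)%nat ->
  c * INR n ^ l <= x ^ S l ->
  Rpower c (/ INR (S l)) * Rpower (INR n) (INR l / INR (S l)) <= x.
Proof.
  intros Hx Hc Hn H. rewrite <- root_scaled_pow, <- (root_of_pow x l Hx) by auto.
  apply Rle_Rpower_l; [apply Rlt_le, Rinv_0_lt_compat, lt_0_INR; lia|].
  split; auto. apply Rmult_lt_0_compat; auto. apply pow_lt, lt_0_INR. lia.
Qed.

Lemma pow_root_upper (x C : R) (n l : nat) : 0 < x -> 0 < C -> (1 <= n)%nat ->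
  x ^ S l <= C * INR n ^ l ->
  x <= Rpower C (/ INR (S l)) * Rpower (INR n) (INR l / INR (S l)).
Proof.
  intros Hx HC Hn H. rewrite <- root_scaled_pow, <- (root_of_pow x l Hx) at 1 by auto.
  apply Rle_Rpower_l; [apply Rlt_le, Rinv_0_lt_compat, lt_0_INR; lia|].
  split; auto. apply pow_lt. auto.
Qed.

Lemma step_div_cases l t : (1 <= l)%nat ->
  (bump l (S t) = 1 /\ S t / l = t / l + 1 /\ t mod l = l - 1)%nat \/
  (bump l (S t) = 0 /\ S t / l = t / l /\ S t mod l = t mod l + 1)%nat.
Proof.
  intros Hl. pose proof (Nat.div_mod t l ltac:(lia)) as E.
  pose proof (Nat.mod_upper_bound t l ltac:(lia)) as B.
  unfold bump.
  destruct (Nat.eq_dec (t mod l + 1) l) as [Heq|Hne].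
  - left. assert (H1 : (0 = S t mod l)%nat) by (apply (Nat.mod_unique _ _ (t / l + 1)); lia).
    assert (H2 : (t / l + 1 = S t / l)%nat) by (apply (Nat.div_unique _ _ _ 0); lia).
    rewrite <- H1. simpl. lia.
  - right.
    assert (H1 : (t mod l + 1 = S t mod l)%nat) by (apply (Nat.mod_unique _ _ (t / l)); lia).
    assert (H2 : (t / l = S t / l)%nat) by (apply (Nat.div_unique _ _ _ (t mod l + 1)); lia).
    rewrite <- H1. destruct (Nat.eqb_spec (t mod l + 1) 0); lia.
Qed.

Lemma div_succ l t : (1 <= l)%nat -> (S t / l = t / l + bump l (S t))%nat.
Proof. intros Hl. destruct (step_div_cases l t Hl) as [[-> [-> _]]|[-> [-> _]]]; lia. Qed.

Section Urn.
Variables (l : nat) (a : list nat) (k : nat).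
Hypothesis Hl : (1 <= l)%nat.
Hypothesis Ha : (1 <= total a)%nat.
Hypothesis Hk : (length a < k)%nat.

(* After [sat_time] steps exactly the colours 1..k are present, and M_k = [sat_count]. *)
Definition sat_time : nat := ((k - length a) * l)%nat.
Definition sat_count : nat := (total a + S l * (k - length a))%nat.

Definition balls (t : nat) : R := INR (total a + t + t / l).

Lemma sat_time_pos : (1 <= sat_time)%nat.
Proof. unfold sat_time. nia. Qed.

Lemma sat_count_ge3 : 3 <= INR sat_count.
Proof. replace 3 with (INR 3) by (simpl; ring). apply le_INR. unfold sat_count. nia. Qed.

Lemma balls_ge t : INR t + 1 <= balls t.
Proof. unfold balls. rewrite <- S_INR. apply le_INR. lia. Qed.

Lemma balls_pos t : 0 < balls t.
Proof. pose proof (balls_ge t). pose proof (pos_INR t). lra. Qed.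

(* Beyond saturation T_t >= t + 1 >= 2, so all the shifts c >= -1 keep T_t + c positive. *)
Lemma balls_shift_pos c t : -1 <= c -> (sat_time <= t)%nat -> 0 < balls t + c.
Proof.
  intros Hc Ht. pose proof (balls_ge t). pose proof sat_time_pos.
  assert (1 <= INR t) by (apply (le_INR 1); lia). lra.
Qed.

(* What is known about every state reachable after t steps. *)
Definition reachable (t : nat) (st : list nat) : Prop :=
  total st = (total a + t + t / l)%nat /\ length st = (length a + t / l)%nat /\
  (sat_time <= t -> sat_count <= Mk k st)%nat.

Lemma reachable_init : reachable 0 a.
Proof. unfold reachable, sat_time. rewrite Nat.Div0.div_0_l. nia. Qed.

Lemma reachable_nonempty t st : reachable t st -> (0 < total st)%nat.
Proof. intros [H _]. lia. Qed.

Lemma reachable_balls t st : reachable t st -> INR (total st) = balls t.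
Proof. intros [H _]. unfold balls. rewrite H. reflexivity. Qed.

Lemma reachable_length t st : (sat_time <= t)%nat -> reachable t st -> (k <= length st)%nat.
Proof.
  intros Ht [_ [H _]]. rewrite H. unfold sat_time in Ht.
  pose proof (Nat.Div0.div_le_mono _ _ l Ht). rewrite Nat.div_mul in * by lia. lia.
Qed.

(* At saturation every ball has a colour <= k. *)
Lemma saturated_Mk st :
  total st = (total a + sat_time + sat_time / l)%nat ->
  length st = (length a + sat_time / l)%nat -> Mk k st = sat_count.
Proof.
  intros H1 H2. unfold sat_time, sat_count in *. rewrite Nat.div_mul in H1, H2 by lia.
  unfold Mk. rewrite firstn_all2 by lia. fold (total st). rewrite H1. nia.
Qed.

Lemma reachable_saturated st : reachable sat_time st -> Mk k st = sat_count.
Proof. intros [H1 [H2 _]]. apply saturated_Mk; auto. Qed.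

Lemma reachable_step t st i : reachable t st -> (i < length st)%nat ->
  reachable (S t) (urn_step l (S t) st i).
Proof.
  intros Hr Hi. pose proof (div_succ l t Hl) as D.
  destruct Hr as [H1 [H2 H3]].
  assert (Htot : total (urn_step l (S t) st i) = (total a + S t + S t / l)%nat)
    by (rewrite step_total by auto; lia).
  assert (Hlen : length (urn_step l (S t) st i) = (length a + S t / l)%nat)
    by (rewrite step_length; lia).
  split; [|split]; auto. intros Ht.
  destruct (Nat.eq_dec sat_time (S t)) as [E|E].
  - rewrite saturated_Mk; rewrite ?E; auto.
  - assert (Hkl : (k <= length st)%nat) by (apply (reachable_length t); [lia|repeat split; auto]).
    rewrite step_Mk by auto. specialize (H3 ltac:(lia)). lia.
Qed.

Lemma urn_affine n F c0 c1 :
  urnE l a n (fun st => c0 + c1 * F st) = c0 + c1 * urnE l a n F.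
Proof.
  apply (expect_affine l reachable); auto using reachable_step, reachable_init.
  apply reachable_nonempty.
Qed.

Lemma urn_mono n F G : (forall st, reachable n st -> F st <= G st) ->
  urnE l a n F <= urnE l a n G.
Proof.
  intros H. apply (expect_mono l reachable); auto using reachable_step, reachable_init.
  apply reachable_nonempty.
Qed.

Lemma urn_jensen F j n : (forall st, 0 <= F st) ->
  urnE l a n F ^ S j <= urnE l a n (fun st => F st ^ S j).
Proof.
  intros HF. set (mu := urnE l a n F).
  assert (Hmu : 0 <= mu).
  { replace 0 with (urnE l a n (fun st => 0 + 0 * F st)) by (rewrite urn_affine; ring).
    apply urn_mono. intros st _. rewrite Rmult_0_l, Rplus_0_l. auto. }
  apply Rle_trans with
    (urnE l a n (fun st => (mu ^ S j - INR (S j) * mu ^ j * mu) + INR (S j) * mu ^ j * F st)).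
  - rewrite urn_affine. fold mu. right. ring.
  - apply urn_mono. intros st _. pose proof (pow_tangent mu (F st) j Hmu (HF st)). lra.
Qed.

Lemma urn_eigen (g : nat -> R) (c : R) : -1 <= c ->
  (forall (T : R) (M : nat), (sat_count <= M)%nat ->
     INR M * g (S M) + (T - INR M) * g M = (T + c) * g M) ->
  forall n, (sat_time <= n)%nat ->
  urnE l a n (fun st => g (Mk k st)) = Phi balls c sat_time n * g sat_count.
Proof.
  intros Hc Heig n Hn. unfold urnE.
  replace n with (sat_time + (n - sat_time))%nat by lia.
  assert (HPhi : forall t, Phi balls c sat_time t <> 0).
  { intros t. apply Rgt_not_eq, Phi_pos; intros u Hu; auto using balls_pos, balls_shift_pos. }
  apply (expect_const l reachable reachable_step reachable_nonempty _ _ _ _ 0 a reachable_init).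
  intros st' Hst'. simpl plus in Hst' |- *.
  rewrite (expect_eigen l reachable reachable_step reachable_nonempty k g
             (Phi balls c sat_time) sat_time); auto.
  - rewrite (reachable_saturated st' Hst'), (Phi_before balls sat_time c sat_time) by lia.
    simpl. rewrite Rdiv_1_r. reflexivity.
  - intros t st Ht Hst. apply (reachable_length t); auto.
  - intros t st Ht Hst. rewrite Phi_S by auto.
    rewrite (reachable_balls t st Hst), Heig by (apply Hst; auto).
    pose proof (balls_pos t). field. split; auto. lra.
Qed.

Lemma urn_rising p n : (sat_time <= n)%nat ->
  urnE l a n (fun st => rising (INR (Mk k st)) p) =
  Phi balls (INR p + 1) sat_time n * rising (INR sat_count) p.
Proof.
  apply (urn_eigen (fun M => rising (INR M) p)); [pose proof (pos_INR p); lra|].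
  intros T M _. rewrite S_INR, (Rmult_comm (INR M)), rising_shift. ring.
Qed.

Lemma urn_mean n : (sat_time <= n)%nat ->
  urnE l a n (fun st => INR (Mk k st)) = Phi balls 1 sat_time n * INR sat_count.
Proof.
  apply (urn_eigen (fun M => INR M)); [lra|]. intros T M _. rewrite S_INR. ring.
Qed.

Lemma urn_inverse n : (sat_time <= n)%nat ->
  urnE l a n (fun st => / (INR (Mk k st) - 1)) =
  Phi balls (-1) sat_time n * / (INR sat_count - 1).
Proof.
  apply (urn_eigen (fun M => / (INR M - 1))); [lra|].
  intros T M HM. pose proof sat_count_ge3. assert (INR sat_count <= INR M) by (apply le_INR; auto).
  rewrite S_INR. field. lra.
Qed.

(* G n = rising(T_n, l) / (T_n + l - n mod l) obeys the recursion of Phi_{l+1}. *)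
Definition G (n : nat) : R := rising (balls n) l / (balls n + INR l - INR (n mod l)).

Lemma G_den_bounds n :
  balls n + 1 <= balls n + INR l - INR (n mod l) <= balls n + INR l.
Proof.
  pose proof (Nat.mod_upper_bound n l ltac:(lia)). pose proof (pos_INR (n mod l)).
  assert (INR (n mod l) + 1 <= INR l) by (rewrite <- S_INR; apply le_INR; lia).
  lra.
Qed.

Lemma rising_succ_ratio x : 0 < x -> rising (x + 1) l = rising x l * (x + INR l + 1) / x.
Proof. intros Hx. apply (Rmult_eq_reg_r x); [|lra]. rewrite rising_shift. field. lra. Qed.

Lemma G_rec n : G (S n) * balls n = G n * (balls n + INR l + 1).
Proof.
  unfold G. pose proof (balls_pos n) as HT.
  pose proof (G_den_bounds n). pose proof (G_den_bounds (S n)).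
  set (T := balls n) in *.
  assert (Hb : balls (S n) = T + 1 + INR (bump l (S n))).
  { unfold T, balls. rewrite div_succ by auto. rewrite <- S_INR, <- plus_INR. f_equal. lia. }
  pose proof (rising_succ_ratio T HT) as E1.
  destruct (step_div_cases l n Hl) as [[D1 [_ D3]]|[D1 [_ D3]]]; rewrite D1 in Hb; simpl in Hb.
  - unfold bump in D1. destruct (Nat.eqb_spec (S n mod l) 0) as [Hm|]; [|discriminate].
    rewrite Hb, Hm, D3, minus_INR in * by lia. simpl INR in *.
    rewrite (rising_succ_ratio (T + 1)), E1 by lra. field. repeat split; lra.
  - rewrite Hb, Rplus_0_r, D3, plus_INR, E1 in *. simpl INR. field. split; lra.
Qed.

Lemma Phi_top_G n : (sat_time <= n)%nat ->
  Phi balls (INR l + 1) sat_time n * G sat_time = G n.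
Proof.
  intros Hn. replace n with (sat_time + (n - sat_time))%nat by lia.
  generalize (n - sat_time)%nat as d. induction d.
  - rewrite Nat.add_0_r, Phi_before by lia. ring.
  - rewrite <- plus_n_Sm, Phi_S by lia. pose proof (balls_pos (sat_time + d)).
    apply (Rmult_eq_reg_r (balls (sat_time + d))); [|lra].
    rewrite G_rec, <- IHd. field. lra.
Qed.

Lemma G_sat : G sat_time = rising (INR sat_count) l / (INR sat_count + INR l).
Proof.
  unfold G, balls, sat_time, sat_count.
  rewrite Nat.div_mul, Nat.Div0.mod_mul, Rminus_0_r by lia. do 3 f_equal; nia.
Qed.

Lemma urn_rising_top n : (sat_time <= n)%nat ->
  urnE l a n (fun st => rising (INR (Mk k st)) l) = INR (sat_count + l) * G n.
Proof.
  intros Hn. rewrite urn_rising, <- Phi_top_G, G_sat, plus_INR by auto.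
  pose proof sat_count_ge3. pose proof (rising_pos (INR sat_count) l ltac:(lra)).
  pose proof (pos_INR l). field. lra.
Qed.

Lemma G_asym : exists C, forall n, (total a + l <= n)%nat ->
  exists r, Rabs r <= C / INR n /\ G n = (INR n * (INR (S l) / INR l)) ^ l * (1 + r).
Proof.
  set (K := INR (total a) + INR l).
  exists ((2 ^ S l + INR (S l)) * K). intros n Hn.
  set (u := INR n * (INR (S l) / INR l)).
  destruct (scaled_time n l Hl) as [Eu Hfrac]. fold u in Eu.
  assert (HA : 1 <= INR (total a)) by (apply (le_INR 1); lia).
  assert (HL : 1 <= INR l) by (apply (le_INR 1); lia).
  assert (HKn : K <= INR n) by (unfold K; rewrite <- plus_INR; apply le_INR; lia).
  assert (HT : balls n = INR (total a) + INR n + INR (n / l))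
    by (unfold balls; rewrite !plus_INR; ring).
  assert (Hu : INR n <= u) by (pose proof (pos_INR (n / l)); lra).
  assert (HK : INR l <= K <= u) by (split; [unfold K|]; lra).
  pose proof (rising_ratio_bounds (balls n) _ u K l Hl HK
                ltac:(lra) ltac:(unfold K; lra) (G_den_bounds n)) as HG.
  fold (G n) in HG.
  assert (Hy : 0 <= K / u <= 1).
  { split; [apply Rmult_le_pos; [|apply Rlt_le, Rinv_0_lt_compat]; lra|].
    apply Rmult_le_reg_r with u; [lra|]. unfold Rdiv. rewrite Rmult_assoc, Rinv_l; lra. }
  destruct (relative_error (G n) (u ^ l) (K / u) (S l) ltac:(apply pow_lt; lra) Hy HG)
    as [r [Hr Er]].
  exists r. split; auto. apply (Rle_trans _ _ _ Hr).
  unfold Rdiv. rewrite Rmult_assoc. apply Rmult_le_compat_l.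
  - pose proof (pos_INR (S l)). pose proof (pow_le 2 (S l) ltac:(lra)). lra.
  - apply Rmult_le_compat_l; [lra|]. apply Rinv_le_contravar; lra.
Qed.

Lemma G_order : exists N, (sat_time <= N)%nat /\ (1 <= N)%nat /\ forall n, (N <= n)%nat ->
  / 2 * (INR n * (INR (S l) / INR l)) ^ l <= G n <= 3 / 2 * (INR n * (INR (S l) / INR l)) ^ l.
Proof.
  destruct G_asym as [C HG].
  destruct (INR_archimed 1 (2 * C) ltac:(lra)) as [N1 HN1].
  exists (sat_time + (total a + l) + N1 + 1)%nat. split; [lia|split; [lia|]].
  intros n Hn. destruct (HG n ltac:(lia)) as [r [Hr ->]].
  assert (Hnpos : 0 < INR n) by (apply lt_0_INR; lia).
  assert (Hu : 0 < (INR n * (INR (S l) / INR l)) ^ l)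
    by (apply pow_lt, Rmult_lt_0_compat, Rdiv_lt_0_compat; auto; apply lt_0_INR; lia).
  assert (Hsmall : C / INR n <= / 2).
  { assert (INR N1 <= INR n) by (apply le_INR; lia).
    apply Rmult_le_reg_r with (INR n); auto.
    unfold Rdiv. rewrite Rmult_assoc, Rinv_l by lra. lra. }
  pose proof (Rle_abs r). pose proof (Rle_abs (- r)). rewrite Rabs_Ropp in *. nra.
Qed.

(* Phi_{l+1}(n) = G n / G sat_time is therefore of exact order n^l. *)
Lemma Phi_top_order : exists c C N, 0 < c /\ 0 < C /\ (sat_time <= N)%nat /\ (1 <= N)%nat /\
  forall n, (N <= n)%nat ->
    c * INR n ^ l <= Phi balls (INR l + 1) sat_time n <= C * INR n ^ l.
Proof.
  destruct G_order as [N [HN0 [HN1 HG]]].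
  set (beta := INR (S l) / INR l).
  assert (Hbeta : 0 < beta ^ l) by (apply pow_lt, Rdiv_lt_0_compat; apply lt_0_INR; lia).
  assert (HG0 : 0 < G sat_time).
  { rewrite G_sat. pose proof sat_count_ge3. pose proof (pos_INR l).
    apply Rdiv_lt_0_compat; [apply rising_pos|]; lra. }
  exists (/ 2 * beta ^ l / G sat_time), (3 / 2 * beta ^ l / G sat_time), N.
  split; [apply Rdiv_lt_0_compat; lra|]. split; [apply Rdiv_lt_0_compat; lra|].
  split; [auto|split; [auto|]].
  intros n Hn. pose proof (HG n Hn) as HGn. fold beta in HGn. rewrite Rpow_mult_distr in HGn.
  replace (Phi balls (INR l + 1) sat_time n) with (G n / G sat_time)
    by (rewrite <- (Phi_top_G n) by lia; field; lra).
  unfold Rdiv. rewrite !(Rmult_comm _ (/ G sat_time)), !Rmult_assoc.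
  pose proof (Rinv_0_lt_compat _ HG0).
  split; apply Rmult_le_compat_l; lra.
Qed.

(* E M_k(n) = sat_count * Phi_1(n) is of exact order n^{l/(l+1)}: the lower bound from
   Phi_{l+1} <= Phi_1^{l+1}, the upper bound from Jensen, (E M)^{l+1} <= E rising(M, l). *)
Lemma Phi1_order : exists c C N, 0 < c /\ 0 < C /\ (sat_time <= N)%nat /\ (1 <= N)%nat /\
  forall n, (N <= n)%nat ->
    c * Rpower (INR n) (INR l / INR (S l)) <= Phi balls 1 sat_time n <=
    C * Rpower (INR n) (INR l / INR (S l)).
Proof.
  destruct Phi_top_order as [c [C [N [Hc [HC [HN0 [HN1 HPhi]]]]]]].
  set (A := INR sat_count). pose proof sat_count_ge3 as HA. fold A in HA.
  assert (HAp : 0 < A ^ S l) by (apply pow_lt; lra).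
  assert (HrA : 0 < rising A l) by (apply rising_pos; lra).
  exists (Rpower c (/ INR (S l))), (Rpower (C * rising A l / A ^ S l) (/ INR (S l))), N.
  split; [apply Rpower_pos|]. split; [apply Rpower_pos|]. split; [auto|split; [auto|]].
  intros n Hn. specialize (HPhi n Hn) as [Hlow Hup].
  pose proof (Phi1_pos balls sat_time (fun t _ => balls_pos t) n) as HP1.
  split.
  - apply pow_root_lower; auto; try lia.
    apply (Rle_trans _ _ _ Hlow), Phi_le_pow. intros t _. apply balls_pos.
  - apply pow_root_upper; auto; try lia.
    { apply Rdiv_lt_0_compat; auto. apply Rmult_lt_0_compat; auto. }
    assert (Hmom : (A * Phi balls 1 sat_time n) ^ S l <= Phi balls (INR l + 1) sat_time n * rising A l).
    { rewrite Rmult_comm, <- urn_mean, <- urn_rising by lia.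
      apply (Rle_trans _ _ _ (urn_jensen _ l n (fun st => pos_INR _))).
      apply urn_mono. intros st _. apply rising_bounds, pos_INR. }
    rewrite Rpow_mult_distr in Hmom.
    apply (Rmult_le_reg_l (A ^ S l)); auto.
    replace (A ^ S l * (C * rising A l / A ^ S l * INR n ^ l))
      with (C * INR n ^ l * rising A l) by (field; lra).
    apply (Rle_trans _ _ _ Hmom), Rmult_le_compat_r; lra.
Qed.

(* Part (a): E M_k(n)^q lies between (E M_k(n))^q (Jensen) and
   E[M (M+1) ... (M+q-1)] = Phi_q(n) rising(sat_count) <= Phi_1(n)^q rising(sat_count). *)
Lemma moments_order q : (1 <= q)%nat ->
  exists c1 c2 : R, exists N : nat, 0 < c1 /\ 0 < c2 /\
     forall n : nat, (N <= n)%nat ->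
       c1 * Rpower (INR n) (INR q * INR l / INR (S l))
         <= urnE l a n (fun st => INR (Mk k st) ^ q)
       /\ urnE l a n (fun st => INR (Mk k st) ^ q)
         <= c2 * Rpower (INR n) (INR q * INR l / INR (S l)).
Proof.
  intros Hq. destruct q as [|j]; [lia|].
  destruct Phi1_order as [c1 [C1 [N [Hc1 [HC1 [HN0 [_ HB]]]]]]].
  set (A := INR sat_count). pose proof sat_count_ge3 as HA. fold A in HA.
  assert (HrA : 0 < rising A j) by (apply rising_pos; lra).
  exists ((A * c1) ^ S j), (C1 ^ S j * rising A j), N.
  split; [apply pow_lt; nra|]. split; [apply Rmult_lt_0_compat; auto; apply pow_lt; auto|].
  intros n Hn. specialize (HB n Hn) as [B1 B2].
  set (x := Rpower (INR n) (INR l / INR (S l))) in *. assert (Hx : 0 < x) by apply Rpower_pos.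
  replace (Rpower (INR n) (INR (S j) * INR l / INR (S l))) with (x ^ S j)
    by (unfold x; rewrite <- Rpower_pow, Rpower_mult by auto; f_equal; unfold Rdiv; ring).
  split.
  - apply Rle_trans with (urnE l a n (fun st => INR (Mk k st)) ^ S j);
      [|apply (urn_jensen _ j n (fun st => pos_INR _))].
    rewrite urn_mean, <- Rpow_mult_distr by lia. fold A.
    apply pow_incr. split; [apply Rmult_le_pos; [|apply Rlt_le]; nra|nra].
  - apply Rle_trans with (urnE l a n (fun st => rising (INR (Mk k st)) j)).
    + apply urn_mono. intros st _. apply rising_bounds, pos_INR.
    + rewrite urn_rising by lia. fold A.
      apply Rle_trans with (Phi balls 1 sat_time n ^ S j * rising A j).
      * apply Rmult_le_compat_r; [lra|]. apply Phi_le_pow. intros t _. apply balls_pos.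
      * replace (C1 ^ S j * rising A j * x ^ S j) with ((C1 * x) ^ S j * rising A j)
          by (rewrite Rpow_mult_distr; ring).
        apply Rmult_le_compat_r; [lra|]. apply pow_incr.
        pose proof (Phi1_pos balls sat_time (fun t _ => balls_pos t) n). lra.
Qed.

Lemma rising_moment_asym :
  exists C : R, exists N : nat,
     forall n : nat, (N <= n)%nat ->
       exists r : R, Rabs r <= C / INR n /\
         urnE l a n (fun st => rising (INR (Mk k st)) l)
         = INR (list_sum a + S l * (k - length a) + l) * INR n ^ l
           * (INR (S l) / INR l) ^ l * (1 + r).
Proof.
  destruct G_asym as [C HG]. exists C, (sat_time + (total a + l))%nat.
  intros n Hn. destruct (HG n ltac:(lia)) as [r [Hr Er]].
  exists r. split; auto.
  rewrite urn_rising_top, Er, Rpow_mult_distr by lia. unfold sat_count, total. ring.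
Qed.

(* Part (c): n^{l/(l+1)} / M <= n^{l/(l+1)} / (M - 1), whose expectation is
   n^{l/(l+1)} Phi_{-1}(n) / (sat_count - 1) <= n^{l/(l+1)} / (Phi_1(n) (sat_count - 1)). *)
Lemma inverse_moment_bounded :
  exists C : R, exists N : nat,
     forall n : nat, (N <= n)%nat ->
       urnE l a n (fun st => Rpower (INR n) (INR l / INR (S l)) / INR (Mk k st)) <= C.
Proof.
  destruct Phi1_order as [c1 [C1 [N [Hc1 [_ [HN0 [_ HB]]]]]]].
  set (A := INR sat_count). pose proof sat_count_ge3 as HA. fold A in HA.
  exists (/ (c1 * (A - 1))), N. intros n Hn. specialize (HB n Hn) as [B1 _].
  set (x := Rpower (INR n) (INR l / INR (S l))) in *. assert (Hx : 0 < x) by apply Rpower_pos.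
  pose proof (Phi1_pos balls sat_time (fun t _ => balls_pos t) n) as HP1.
  assert (HPm : Phi balls (-1) sat_time n <= / Phi balls 1 sat_time n).
  { apply (Rmult_le_reg_r (Phi balls 1 sat_time n)); auto. rewrite Rinv_l by lra.
    apply Phi_opp_le_inv; [intros t _; apply balls_pos|].
    intros t Ht. pose proof (balls_shift_pos (-1) t ltac:(lra) Ht). lra. }
  assert (HPinv : / Phi balls 1 sat_time n <= / (c1 * x))
    by (apply Rinv_le_contravar; auto; nra).
  apply Rle_trans with (urnE l a n (fun st => 0 + x * / (INR (Mk k st) - 1))).
  - apply urn_mono. intros st [_ [_ Hsat]].
    assert (HM : A <= INR (Mk k st)) by (apply le_INR, Hsat; lia).
    rewrite Rplus_0_l. apply Rmult_le_compat_l; [lra|]. apply Rinv_le_contravar; lra.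
  - rewrite urn_affine, urn_inverse, Rplus_0_l by lia. fold A.
    replace (/ (c1 * (A - 1))) with (x * / (c1 * x) * / (A - 1)) by (field; lra).
    rewrite <- Rmult_assoc. apply Rmult_le_compat_r; [apply Rlt_le, Rinv_0_lt_compat; lra|].
    apply Rmult_le_compat_l; lra.
Qed.

End Urn.

Theorem lemma3p3 (l : nat) (a : list nat) (k q : nat) :
  (1 <= l)%nat ->
  (1 <= length a)%nat ->
  Forall (fun c => (1 <= c)%nat) a ->
  (length a < k)%nat ->
  (1 <= q)%nat ->
  (* (a) E M_k(n)^q is of order n^{q l/(l+1)} *)
  (exists c1 c2 : R, exists N : nat, 0 < c1 /\ 0 < c2 /\
     forall n : nat, (N <= n)%nat ->
       c1 * Rpower (INR n) (INR q * INR l / INR (S l))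
         <= urnE l a n (fun st => INR (Mk k st) ^ q)
       /\ urnE l a n (fun st => INR (Mk k st) ^ q)
         <= c2 * Rpower (INR n) (INR q * INR l / INR (S l)))
  /\
  (* (b) E{M_k(n)(M_k(n)+1)...(M_k(n)+l)}
         = (m_s + (l+1)(k-s) + l) n^l ((l+1)/l)^l (1 + O(1/n)) *)
  (exists C : R, exists N : nat,
     forall n : nat, (N <= n)%nat ->
       exists r : R, Rabs r <= C / INR n /\
         urnE l a n (fun st => rising (INR (Mk k st)) l)
         = INR (list_sum a + S l * (k - length a) + l) * INR n ^ l
           * (INR (S l) / INR l) ^ l * (1 + r))
  /\
  (* (c) limsup E (n^{l/(l+1)} / M_k(n)) < infinity *)
  (exists C : R, exists N : nat,
     forall n : nat, (N <= n)%nat ->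
       urnE l a n (fun st => Rpower (INR n) (INR l / INR (S l)) / INR (Mk k st))
         <= C).
Proof.
  intros Hl Hs Hpos Hk Hq.
  (* the initial urn is nonempty: it contains at least one ball of colour 1 *)
  assert (Ha : (1 <= total a)%nat).
  { destruct a as [|x r]; [simpl in Hs; lia|]. inversion Hpos; subst. unfold total; simpl. lia. }
  split; [|split].
  - apply moments_order; auto.
  - apply rising_moment_asym; auto.
  - apply inverse_moment_bounded; auto.
Qed.
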